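(* For all positive real numbers $a,b,c$ and every integer $n\ge 1$, $$\sum_{k=1}^{n}\binom{n}{k}(ab+c)^{n-k}(ab+2c)^{k}\,a^{\xi(k)}\,(ab)^{\lfloor k/2\rfloor}\,c^{\,n-k}\,F_k^{(a,b,c)}=F_{4n}^{(a,b,c)}.$$
   Context: For positive real numbers $a,b,c$, the generalized Fibonacci numbers $F_m^{(a,b,c)}$ are defined by $F_0^{(a,b,c)}=0$, $F_1^{(a,b,c)}=1$, and for $m\ge 2$: $F_m^{(a,b,c)}=a\,F_{m-1}^{(a,b,c)}+c\,F_{m-2}^{(a,b,c)}$ if $m$ is even, and $F_m^{(a,b,c)}=b\,F_{m-1}^{(a,b,c)}+c\,F_{m-2}^{(a,b,c)}$ if $m$ is odd. For an integer $k$, $\lfloor k/2\rfloor$ denotes the floor of $k/2$ and $\xi(k):=k-2\lfloor k/2\rfloor$. *)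

From Stdlib Require Import Reals Arith Lia.
Open Scope R_scope.

(* Generalized Fibonacci numbers F_m^{(a,b,c)}, computed as pairs
   (F_m, F_{m+1}). F_0 = 0, F_1 = 1; for m >= 2,
   F_m = a F_{m-1} + c F_{m-2} if m even, b F_{m-1} + c F_{m-2} if m odd. *)
Fixpoint genFib_pair (a b c : R) (m : nat) : R * R :=
  match m with
  | O => (0, 1)
  | S m' =>
      let (x, y) := genFib_pair a b c m' in
      (* x = F_{m'}, y = F_{m'+1}; next = F_{m'+2}, index m'+2 = m+1 *)
      (y, (if Nat.even (S m) then a else b) * y + c * x)
  end.

Definition genFib (a b c : R) (m : nat) : R := fst (genFib_pair a b c m).

Definition xi (k : nat) : nat := (k - 2 * Nat.div2 k)%nat.

Lemma genFib_0 a b c : genFib a b c 0 = 0. Proof. reflexivity. Qed.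
Lemma genFib_1 a b c : genFib a b c 1 = 1. Proof. reflexivity. Qed.
Lemma genFib_2 a b c : genFib a b c 2 = a * 1 + c * 0. Proof. reflexivity. Qed.
Lemma genFib_3 a b c : genFib a b c 3 = b * (a * 1 + c * 0) + c * 1. Proof. reflexivity. Qed.
Lemma genFib_SS a b c m :
  genFib a b c (S (S m)) =
  (if Nat.even (S (S m)) then a else b) * genFib a b c (S m) + c * genFib a b c m.
Proof.
  unfold genFib; simpl. destruct (genFib_pair a b c m) as [x y]; reflexivity.
Qed.

From Stdlib Require Import Reals Arith Lia Lra FunctionalExtensionality.
Open Scope R_scope.

(* The generalized Fibonacci recursion has coefficients that
   alternate with the parity of the index.  Weighting the terms as
     W k = a^(xi k) * (a b)^(k/2) * F_k
   removes the alternation: W satisfies the constant-coefficient recurrence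
     W (k+2) = (a b) W (k+1) + (a b c) W k,
   and iterating it twice gives the four-step recurrence
     W (k+4) = (a b)^2 ((a b + 2 c) W (k+1) + c (a b + c) W k).
   A general binomial-iteration lemma then shows that any sequence H with
   H (j+4) = P (X H j + Y H (j+1)) satisfies
     P^n * sum_k C(n,k) X^(n-k) Y^k H (m+k) = H (m + 4n),
   proved by induction on n via Pascal's rule for such binomial sums.
   Taking m = 0, the k = 0 term vanishes (W 0 = 0) and W (4n) = (a b)^(2n) F_(4n),
   so cancelling (a b)^(2n) yields the theorem. *)

Lemma genFib_even_step a b c j :
  genFib a b c (2 * j + 2) = a * genFib a b c (2 * j + 1) + c * genFib a b c (2 * j).
Proof.
  replace (2 * j + 2)%nat with (S (S (2 * j))) by lia.
  replace (2 * j + 1)%nat with (S (2 * j)) by lia.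
  rewrite genFib_SS.
  replace (S (S (2 * j))) with (2 * S j)%nat by lia.
  rewrite Nat.even_mul. reflexivity.
Qed.

Lemma genFib_odd_step a b c j :
  genFib a b c (2 * j + 3) = b * genFib a b c (2 * j + 2) + c * genFib a b c (2 * j + 1).
Proof.
  replace (2 * j + 3)%nat with (S (S (2 * j + 1))) by lia.
  replace (2 * j + 2)%nat with (S (2 * j + 1)) by lia.
  rewrite genFib_SS.
  replace (S (S (2 * j + 1))) with (S (2 * S j))%nat by lia.
  rewrite Nat.even_succ, Nat.odd_mul. reflexivity.
Qed.

(* The weighted sequence, whose recurrence no longer depends on parity. *)
Definition weightedFib (a b c : R) (k : nat) : R :=
  a ^ xi k * (a * b) ^ Nat.div2 k * genFib a b c k.

Lemma weightedFib_even a b c j :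
  weightedFib a b c (2 * j) = (a * b) ^ j * genFib a b c (2 * j).
Proof.
  unfold weightedFib, xi. rewrite Nat.div2_double, Nat.sub_diag. simpl; ring.
Qed.

Lemma weightedFib_odd a b c j :
  weightedFib a b c (2 * j + 1) = a * (a * b) ^ j * genFib a b c (2 * j + 1).
Proof.
  unfold weightedFib, xi.
  replace (2 * j + 1)%nat with (S (2 * j)) by lia.
  rewrite Nat.div2_succ_double.
  replace (S (2 * j) - 2 * j)%nat with 1%nat by lia. simpl; ring.
Qed.

Lemma weightedFib_step a b c k :
  weightedFib a b c (k + 2) =
  (a * b) * weightedFib a b c (k + 1) + (a * b * c) * weightedFib a b c k.
Proof.
  destruct (Nat.Even_or_Odd k) as [[j ->] | [j ->]].
  - replace (2 * j + 2)%nat with (2 * S j)%nat by lia.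
    rewrite weightedFib_even, weightedFib_odd, weightedFib_even.
    replace (2 * S j)%nat with (2 * j + 2)%nat by lia.
    rewrite genFib_even_step. simpl; ring.
  - replace (2 * j + 1 + 2)%nat with (2 * S j + 1)%nat by lia.
    replace (2 * j + 1 + 1)%nat with (2 * S j)%nat by lia.
    rewrite weightedFib_odd, weightedFib_even, weightedFib_odd.
    replace (2 * S j + 1)%nat with (2 * j + 3)%nat by lia.
    replace (2 * S j)%nat with (2 * j + 2)%nat by lia.
    rewrite genFib_odd_step. simpl; ring.
Qed.

Lemma weightedFib_step4 a b c j :
  weightedFib a b c (j + 4) =
  (a * b) ^ 2 * (c * (a * b + c) * weightedFib a b c j
                 + (a * b + 2 * c) * weightedFib a b c (S j)).
Proof.
  replace (j + 4)%nat with (j + 2 + 2)%nat by lia.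
  rewrite !weightedFib_step.
  replace (j + 2 + 1)%nat with (j + 1 + 2)%nat by lia.
  replace (S j) with (j + 1)%nat by lia.
  rewrite !weightedFib_step.
  replace (j + 1 + 1)%nat with (j + 2)%nat by lia.
  rewrite weightedFib_step. ring.
Qed.

Definition binomSum (X Y : R) (n : nat) (g : nat -> R) : R :=
  sum_f_R0 (fun k => C n k * X ^ (n - k) * Y ^ k * g k) n.

Lemma C_n_0 n : C n 0 = 1.
Proof. unfold C. rewrite Nat.sub_0_r. simpl. field. apply INR_fact_neq_0. Qed.

Lemma C_n_n n : C n n = 1.
Proof. unfold C. rewrite Nat.sub_diag. simpl. field. apply INR_fact_neq_0. Qed.

(* Pascal's rule for binomial sums: multiplying by (X + "shift by Y"). *)
Lemma binomSum_succ X Y n g :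
  binomSum X Y (S n) g = X * binomSum X Y n g + Y * binomSum X Y n (fun k => g (S k)).
Proof.
  unfold binomSum. destruct n as [|m].
  - simpl. rewrite !C_n_0, C_n_n. simpl. ring.
  - rewrite (decomp_sum _ (S (S m))) by lia. simpl pred. rewrite tech5.
    rewrite (decomp_sum _ (S m)) by lia. simpl pred. rewrite tech5.
    assert (Hinner :
      sum_f_R0 (fun i => C (S (S m)) (S i) * X ^ (S (S m) - S i) * Y ^ S i * g (S i)) m =
      X * sum_f_R0 (fun i => C (S m) (S i) * X ^ (S m - S i) * Y ^ S i * g (S i)) m
      + Y * sum_f_R0 (fun k => C (S m) k * X ^ (S m - k) * Y ^ k * g (S k)) m).
    { rewrite !scal_sum, <- plus_sum. apply sum_eq. intros i Hi.
      rewrite <- pascal by lia.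
      replace (S (S m) - S i)%nat with (S (m - i)) by lia.
      replace (S m - S i)%nat with (m - i)%nat by lia.
      replace (S m - i)%nat with (S (m - i)) by lia.
      simpl. ring. }
    rewrite Hinner, !C_n_0, !C_n_n, !Nat.sub_diag, !Nat.sub_0_r. simpl. ring.
Qed.

Lemma binomSum_iterate X Y P (H : nat -> R)
  (Hrec : forall j, H (j + 4)%nat = P * (X * H j + Y * H (S j))) :
  forall n m, P ^ n * binomSum X Y n (fun k => H (m + k)%nat) = H (m + 4 * n)%nat.
Proof.
  induction n as [|n IH]; intros m.
  - unfold binomSum. simpl. rewrite C_n_0, Nat.add_0_r. ring.
  - rewrite binomSum_succ.
    replace (fun k => H (m + S k)%nat) with (fun k => H (S m + k)%nat)
      by (apply functional_extensionality; intros k; f_equal; lia).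
    replace (m + 4 * S n)%nat with (m + 4 * n + 4)%nat by lia.
    rewrite Hrec.
    replace (S (m + 4 * n)) with (S m + 4 * n)%nat by lia.
    rewrite <- (IH m), <- (IH (S m)). simpl; ring.
Qed.

Theorem lemma1 (a b c : R) (n : nat) :
  0 < a -> 0 < b -> 0 < c -> (1 <= n)%nat ->
  sum_f 1 n (fun k =>
    C n k * (a * b + c) ^ (n - k) * (a * b + 2 * c) ^ k
      * a ^ (xi k) * (a * b) ^ (Nat.div2 k) * c ^ (n - k)
      * genFib a b c k)
  = genFib a b c (4 * n).
Proof.
  intros Ha Hb Hc Hn.
  pose proof (binomSum_iterate _ _ _ _ (weightedFib_step4 a b c) n 0) as Hiter.
  replace (0 + 4 * n)%nat with (2 * (2 * n))%nat in Hiter by lia.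
  rewrite weightedFib_even, pow_mult in Hiter.
  apply (Rmult_eq_reg_l (((a * b) ^ 2) ^ n)); [|apply pow_nonzero, pow_nonzero; nra].
  replace (4 * n)%nat with (2 * (2 * n))%nat by lia.
  rewrite <- Hiter. f_equal.
  (* The k = 0 term of the binomial sum vanishes since F_0 = 0. *)
  unfold binomSum, sum_f.
  rewrite (decomp_sum _ n) by lia.
  unfold weightedFib at 1. rewrite Nat.add_0_r, genFib_0, !Rmult_0_r, Rplus_0_l.
  replace (pred n) with (n - 1)%nat by lia.
  apply sum_eq. intros i Hi.
  rewrite Nat.add_1_r. unfold weightedFib. simpl (0 + S i)%nat.
  rewrite (Rpow_mult_distr c). ring.
Qed.
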